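(* Let $A$ be a set (the assembly) and let $\mathcal{E}$ be a set of subsets of $A$ (the efficacious coalitions) such that (C1) for every $K\subseteq A$, $K\in\mathcal{E}$ if and only if $A\setminus K\notin\mathcal{E}$; and (C2) if $K\in\mathcal{E}$ and $K\subseteq L\subseteq A$, then $L\in\mathcal{E}$. Suppose each member of $A$ chooses one of the six strict total orders on three candidates $a,b,c$, labelled by $\mathbb{Z}/6\mathbb{Z}$ as follows: $1: a>b>c$, $2: a>c>b$, $3: c>a>b$, $4: c>b>a$, $5: b>c>a$, $6: b>a>c$. For $p\in\mathbb{Z}/6\mathbb{Z}$ let $K(p)$ be the set of members who chose ranking $p$, and write $K(p,q)=K(p)\cup K(q)$. Suppose the following condition (S) holds: there exists $p\in\mathbb{Z}/6\mathbb{Z}$ such that $K(p,p+1)=\emptyset$ or $K(p,p+3)=\emptyset$. Then condition (T) holds: there exists $p\in\mathbb{Z}/6\mathbb{Z}$ such that $K(p,p+1)\in\mathcal{E}$.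
   Context: Indices of $K(\cdot)$ are taken modulo $6$. The sets $K(1),\dots,K(6)$ partition $A$. *)

From mathcomp Require Import all_boot all_algebra.
From mathcomp Require Import classical_sets.
Set Implicit Arguments. Unset Strict Implicit. Unset Printing Implicit Defensive.
Import GRing.Theory.
Local Open Scope classical_set_scope.
Local Open Scope ring_scope.

(* Rankings of the three candidates a,b,c are labelled by 'Z_6 :
   1: a>b>c, 2: a>c>b, 3: c>a>b, 4: c>b>a, 5: b>c>a, 6 (= 0): b>a>c. *)

Definition Kset (A : Type) (r : A -> 'Z_6) (p : 'Z_6) : set A :=
  [set x | r x = p].

Definition Kpair (A : Type) (r : A -> 'Z_6) (p q : 'Z_6) : set A :=
  Kset r p `|` Kset r q.

Definition C1 (A : Type) (E : set (set A)) : Prop :=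
  forall K : set A, E K <-> ~ E (~` K).

Definition C2 (A : Type) (E : set (set A)) : Prop :=
  forall K L : set A, E K -> K `<=` L -> E L.

Definition condS (A : Type) (r : A -> 'Z_6) : Prop :=
  exists p : 'Z_6, Kpair r p (p + 1) = set0 \/ Kpair r p (p + 3%:R) = set0.

Definition condT (A : Type) (E : set (set A)) (r : A -> 'Z_6) : Prop :=
  exists p : 'Z_6, E (Kpair r p (p + 1)).

From mathcomp Require Import all_boot all_algebra.
From mathcomp Require Import classical_sets.
Set Implicit Arguments. Unset Strict Implicit. Unset Printing Implicit Defensive.
Import GRing.Theory.
Local Open Scope classical_set_scope.
Local Open Scope ring_scope.

(* When K(p,p+1) is empty, every member lies in exactly one of K(p+2,p+3) and
   K(p+4,p+5); when K(p,p+3) is empty, in exactly one of K(p+1,p+2) and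
   K(p+4,p+5).  In both cases the two coalitions are complementary, so by (C1)
   one of them is efficacious. *)

Lemma C1_or_setC (A : Type) (E : set (set A)) (K : set A) :
  C1 E -> E K \/ E (~` K).
Proof.
move=> C1E; have [|notEK] := boolp.pselect (E K); first by left.
by right; apply/C1E; rewrite setCK.
Qed.

Lemma condT_of_setC_Kpair (A : Type) (E : set (set A)) (r : A -> 'Z_6) (q s : 'Z_6) :
  C1 E -> ~` Kpair r q (q + 1) = Kpair r s (s + 1) -> condT E r.
Proof.
move=> C1E Kqs; have [EKq|] := C1_or_setC (Kpair r q (q + 1)) C1E.
  by exists q.
by rewrite Kqs; exists s.
Qed.

Lemma in_Kpair (A : Type) (r : A -> 'Z_6) (p q : 'Z_6) (x : A) :
  Kpair r p q x <-> r x \in [:: p; q].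
Proof.
rewrite !inE; split; first by case=> ->; rewrite eqxx ?orbT.
by case/orP=> /eqP; [left|right].
Qed.

Lemma setC_Kpair (A : Type) (r : A -> 'Z_6) (q1 q2 s1 s2 : 'Z_6) :
  (forall x, (r x \in [:: q1; q2]) = (r x \notin [:: s1; s2])) ->
  ~` Kpair r q1 q2 = Kpair r s1 s2.
Proof.
move=> rqs; apply/seteqP; split=> x /=; rewrite !in_Kpair.
  by move/negP; rewrite rqs negbK.
by rewrite -[_ \in _]negbK -rqs => /negP.
Qed.

Lemma notin_Kpair_set0 (A : Type) (r : A -> 'Z_6) (p q : 'Z_6) (x : A) :
  Kpair r p q = set0 -> r x \notin [:: p; q].
Proof. by move=> Kpq; apply/negP => /in_Kpair; rewrite Kpq. Qed.

Lemma addr_eql (V : zmodType) (x y : V) : (x + y == x) = (y == 0).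
Proof. by rewrite -[X in _ == X]addr0 (inj_eq (addrI x)). Qed.

Lemma Zp6_split_without_adjacent (p y : 'Z_6) : y \notin [:: p; p + 1] ->
  (y \in [:: p + 2; p + 2 + 1]) = (y \notin [:: p + 4; p + 4 + 1]).
Proof.
(* translating by p reduces the claim to p = 0 *)
rewrite -(subrKC p y); move: (y - p) => k.
rewrite !inE -!addrA !(inj_eq (addrI p)) addr_eql.
by case: k => [[|[|[|[|[|[|//]]]]]] ?].
Qed.

Lemma Zp6_split_without_opposite (p y : 'Z_6) : y \notin [:: p; p + 3] ->
  (y \in [:: p + 1; p + 1 + 1]) = (y \notin [:: p + 4; p + 4 + 1]).
Proof.
rewrite -(subrKC p y); move: (y - p) => k.
rewrite !inE -!addrA !(inj_eq (addrI p)) addr_eql.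
by case: k => [[|[|[|[|[|[|//]]]]]] ?].
Qed.

Theorem mainTheorem1 (A : Type) (E : set (set A)) (r : A -> 'Z_6) :
  C1 E -> C2 E -> condS r -> condT E r.
Proof.
move=> C1E _ [p [Kp0|Kp0]].
- apply: (@condT_of_setC_Kpair _ _ _ (p + 2) (p + 4) C1E).
  apply: setC_Kpair => x; apply: Zp6_split_without_adjacent.
  exact: notin_Kpair_set0 Kp0.
- apply: (@condT_of_setC_Kpair _ _ _ (p + 1) (p + 4) C1E).
  apply: setC_Kpair => x; apply: Zp6_split_without_opposite.
  exact: notin_Kpair_set0 Kp0.
Qed.
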